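(* Let $Y$ be a metric space and $X$ a non-empty subset. If for every pair of points $x,y\in Y$ there exists a point $z\in C(x,y)\cap X$ (cone taken in $Y$), then the restriction map $f\mapsto f|_X$ is an isometry from $\mathrm{E}(Y)$ onto $\mathrm{E}(X)$.
   Context: $I(x,y)=\{v\in Y: d(x,v)+d(v,y)=d(x,y)\}$ and $C(x,v)=\{y\in Y: v\in I(x,y)\}$. For a metric space $Z$, $\Delta(Z)=\{f\colon Z\to\mathbb R: f(x)+f(y)\ge d(x,y)\ \forall x,y\}$ with the pointwise order; $\mathrm E(Z)$ is its set of minimal elements, with metric $\|f-g\|_\infty=\sup|f-g|$. *)

From mathcomp Require Import all_boot all_order all_algebra.
From mathcomp Require Import all_classical all_reals.
From mathcomp Require Import ereal.
Set Implicit Arguments. Unset Strict Implicit. Unset Printing Implicit Defensive.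
Import Order.TTheory GRing.Theory Num.Theory.
Local Open Scope ring_scope.
Local Open Scope classical_set_scope.

Definition is_metric (R : realType) (T : Type) (d : T -> T -> R) : Prop :=
  (forall x y, 0 <= d x y) /\
  (forall x y, d x y = 0 <-> x = y) /\
  (forall x y, d x y = d y x) /\
  (forall x y z, d x z <= d x y + d y z).

Definition Ival (R : realType) (T : Type) (d : T -> T -> R) (x y : T) : set T :=
  [set v | d x v + d v y = d x y].

Definition Cone (R : realType) (T : Type) (d : T -> T -> R) (x v : T) : set T :=
  [set y | Ival d x y v].

Definition Delta (R : realType) (T : Type) (d : T -> T -> R) : set (T -> R) :=
  [set f | forall x y, d x y <= f x + f y].

Definition Emin (R : realType) (T : Type) (d : T -> T -> R) : set (T -> R) :=
  [set f | Delta d f /\ forall g, Delta d g -> (forall x, g x <= f x) -> g = f].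

Definition supdist (R : realType) (T : Type) (f g : T -> R) : \bar R :=
  ereal_sup [set (`|f z - g z|)%:E | z in [set: T]].

Definition subdist (R : realType) (T : Type) (d : T -> T -> R) (X : set T)
  (a b : {x : T | X x}) : R := d (proj1_sig a) (proj1_sig b).

Definition restr (R : realType) (T : Type) (X : set T) (f : T -> R)
  : {x : T | X x} -> R := fun a => f (proj1_sig a).

From mathcomp Require Import all_boot all_order all_algebra.
From mathcomp Require Import all_classical all_reals.
From mathcomp Require Import ereal.
From mathcomp Require Import lra.
Import Order.TTheory GRing.Theory Num.Theory.
Local Open Scope ring_scope.
Local Open Scope classical_set_scope.

(* A minimal f in Delta(Y) is tight: f(y) = sup_x (d(y,x) - f(x)), and is
   1-Lipschitz.  If every cone C(x,y) meets X, a point y of Y can be pushed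
   along a geodesic through y to a point z of X without changing the value of
   d(x,.) - f(.) for the witness x; this makes restrictions of tight functions
   tight on X and shows that differences f - g of tight functions are almost
   maximised on X, so the sup-distance is preserved.  Conversely a tight h on
   X extends to Y by f(y) := sup_{x in X} (d(y,x) - h(x)), which is tight on Y
   because, again, every pair of points of Y is connected through X. *)

Definition tight {R : realType} {T : Type} (d : T -> T -> R) (f : T -> R) :=
  forall x (e : R), 0 < e -> exists y, f x + f y < d x y + e.

Section Tight.
Context {R : realType} {T : Type} {d : T -> T -> R}.

Lemma tight_Emin f : Delta d f -> tight d f -> Emin d f.
Proof.
move=> Df Tf; split => // g Dg gf; apply/funext => x.
apply/le_anti; rewrite gf /=; apply/ler_addgt0Pr => e e0.
have [y Hy] := Tf x e e0; have := Dg x y; have := gf y; lra.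
Qed.

Hypothesis dC : forall x y, d x y = d y x.

(* If f were not tight at x, lowering f at x alone would stay in Delta. *)
Lemma Emin_tight [f] : Emin d f -> tight d f.
Proof.
move=> [Df Mf] x e e0; apply: contrapT => notT.
have far y : d x y + e <= f x + f y.
  by rewrite leNgt; apply/negP => Hy; apply: notT; exists y; lra.
pose g z := if pselect (z = x) is left _ then f x - e / 2 else f z.
have Dg : Delta d g.
  move=> a b; rewrite /g.
  case: (pselect (a = x)) => [->|ax]; case: (pselect (b = x)) => [->|bx].
  - have := far x; lra.
  - have := far b; have := Df x b; lra.
  - have := far a; rewrite dC; lra.
  - exact: Df.
have gf z : g z <= f z by rewrite /g; case: (pselect (z = x)) => [->|_]; lra.
have /(congr1 (fun h => h x)) := Mf g Dg gf; rewrite /g.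
by case: (pselect (x = x)) => // _; lra.
Qed.

Hypothesis tri : forall x y z, d x z <= d x y + d y z.

Lemma Emin_lipschitz [f] : Emin d f -> forall x y, f x <= f y + d x y.
Proof.
move=> Ef x y; apply/ler_addgt0Pr => e e0.
have [w Hw] := Emin_tight Ef x e e0; have := tri x y w; have := Ef.1 y w; lra.
Qed.

End Tight.

Lemma supdist_restr_approx (R : realType) (T : Type) (X : set T) (f g : T -> R) :
  (forall y (e : R), 0 < e -> exists2 z, X z & `|f y - g y| <= `|f z - g z| + e) ->
  supdist (@restr _ _ X f) (@restr _ _ X g) = supdist f g.
Proof.
move=> approx; apply/eqP; rewrite eq_le; apply/andP; split.
  apply: ge_ereal_sup => _ [a _ <-]; apply: ereal_sup_ubound.
  by exists (proj1_sig a).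
apply: ge_ereal_sup => _ [y _ <-]; apply/lee_addgt0Pr => e e0.
have [z Xz Hz] := approx y e e0.
apply: (@le_trans _ _ ((`|f z - g z| + e)%:E)); first by rewrite lee_fin.
rewrite EFinD; apply: leeD => //; apply: ereal_sup_ubound.
by exists (exist _ z Xz).
Qed.

Section ConeCondition.
Context {R : realType} {T : Type} {d : T -> T -> R} {X : set T}.
Hypothesis d_metric : is_metric d.
Hypothesis cone : forall x y : T, exists z, Cone d x y z /\ X z.

Let dC : forall x y, d x y = d y x. Proof. by case: d_metric => _ [_ []]. Qed.
Let tri : forall x y z, d x z <= d x y + d y z.
Proof. by case: d_metric => _ [_ [_]]. Qed.

Lemma cone_meets x y : exists2 z, X z & d x y + d y z = d x z.
Proof. by have [z [Cz Xz]] := cone x y; exists z. Qed.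

Lemma subdistC (a b : {x : T | X x}) : subdist d a b = subdist d b a.
Proof. exact: dC. Qed.

Lemma Emin_restr f : Emin d f -> Emin (@subdist _ _ d X) (@restr _ _ X f).
Proof.
move=> Ef; apply: tight_Emin; first by move=> a b; apply: Ef.1.
move=> [x Xx] e e0; have [y Hy] := Emin_tight dC Ef x e e0.
have [z Xz xyz] := cone_meets x y; exists (exist _ z Xz).
rewrite /subdist /restr /=.
have := Emin_lipschitz dC tri Ef z y; rewrite (dC z y); lra.
Qed.

Lemma Emin_sub_approx [f g] : Emin d f -> Emin d g -> forall y (e : R), 0 < e ->
  exists2 z, X z & f y - g y < f z - g z + e.
Proof.
move=> Ef Eg y e e0; have [w Hw] := Emin_tight dC Ef y e e0.
have [z Xz wyz] := cone_meets w y; exists z => //.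
have := Ef.1 z w; have := Emin_lipschitz dC tri Eg z y.
rewrite (dC z y) (dC z w); have := dC w y; lra.
Qed.

Lemma supdist_restr_Emin f g : Emin d f -> Emin d g ->
  supdist (@restr _ _ X f) (@restr _ _ X g) = supdist f g.
Proof.
move=> Ef Eg; apply: supdist_restr_approx => y e e0.
case: (lerP 0 (f y - g y)) => fgy.
  have [z Xz Hz] := Emin_sub_approx Ef Eg y e e0; exists z => //.
  by rewrite ger0_norm //; have := ler_norm (f z - g z); lra.
have [z Xz Hz] := Emin_sub_approx Eg Ef y e e0; exists z => //.
by rewrite ltr0_norm // distrC; have := ler_norm (g z - f z); lra.
Qed.

Context {x0 : T} (Xx0 : X x0).
Variables (h : {x : T | X x} -> R) (Eh : Emin (@subdist _ _ d X) h).

Definition extension_set (y : T) : set R :=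
  [set d y (proj1_sig x) - h x | x in [set: {x : T | X x}]].

Lemma extension_set_has_sup y : has_sup (extension_set y).
Proof.
split; first by exists (d y x0 - h (exist _ x0 Xx0)), (exist _ x0 Xx0).
exists (d y x0 + h (exist _ x0 Xx0)) => _ [x _ <-].
have := tri y x0 (proj1_sig x); have := Eh.1 (exist _ x0 Xx0) x.
rewrite /subdist /=; lra.
Qed.

Definition extension (y : T) : R := sup (extension_set y).

Lemma extension_ge y x : d y (proj1_sig x) - h x <= extension y.
Proof. by apply: sup_upper_bound (extension_set_has_sup y) _ _; exists x. Qed.

Lemma extension_approx y (e : R) :
  0 < e -> exists x, extension y - e < d y (proj1_sig x) - h x.
Proof.
by move=> e0; have [_ [x _ <-] Hx] := sup_adherent e0 (extension_set_has_sup y); exists x.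
Qed.

Lemma extension_restr : @restr _ _ X extension = h.
Proof.
apply/funext => a; apply/le_anti/andP; split.
  apply/ler_addgt0Pr => e e0; have [x Hx] := extension_approx (proj1_sig a) e e0.
  by have := Eh.1 a x; rewrite /subdist /restr; lra.
apply/ler_addgt0Pr => e e0; have [x Hx] := Emin_tight subdistC Eh a e e0.
have := extension_ge (proj1_sig a) x; move: Hx; rewrite /subdist /restr; lra.
Qed.

Lemma extension_lipschitz y z : h z <= extension y + d y (proj1_sig z).
Proof.
apply/ler_addgt0Pr => e e0; have [x Hx] := Emin_tight subdistC Eh z e e0.
have := extension_ge y x; have := tri (proj1_sig z) y (proj1_sig x).
by move: Hx; rewrite /subdist (dC (proj1_sig z) y); lra.
Qed.

Lemma Emin_extension : Emin d extension.
Proof.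
apply: tight_Emin.
  move=> y y'; have [z Xz y'yz] := cone_meets y' y.
  have := extension_ge y' (exist _ z Xz).
  have := extension_lipschitz y (exist _ z Xz).
  by have := dC y' y; rewrite /= => ?; lra.
move=> y e e0; have [x Hx] := extension_approx y e e0; exists (proj1_sig x).
by have := congr1 (fun k => k x) extension_restr; rewrite /restr /= => ->; lra.
Qed.

End ConeCondition.

Theorem proposition5p4 (R : realType) (T : Type) (d : T -> T -> R) (X : set T) :
  is_metric d ->
  (exists x, X x) ->
  (forall x y : T, exists z, Cone d x y z /\ X z) ->
  (forall f, Emin d f -> Emin (@subdist R T d X) (@restr R T X f)) /\
  (forall f g, Emin d f -> Emin d g ->
     supdist (@restr R T X f) (@restr R T X g) = supdist f g) /\
  (forall h, Emin (@subdist R T d X) h -> exists f, Emin d f /\ @restr R T X f = h).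
Proof.
move=> d_metric [x0 Xx0] cone; split; first exact: Emin_restr.
split; first exact: supdist_restr_Emin.
move=> h Eh; exists (@extension _ _ d X h).
split; first exact: (Emin_extension d_metric cone Xx0 h Eh).
exact: (extension_restr d_metric Xx0 h Eh).
Qed.
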